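(* In every run of the algorithm described in the context, at every time and for every $i\in\{1,\dots,n\}$, we have $w\_sync_i[i]=\max\{w\_sync_i[j] : 1\le j\le n\}$.
   Context: Model. There are $n$ asynchronous processes $p_1,\dots,p_n$, of which up to $t<n/2$ may crash; a process runs its algorithm correctly until it crashes. Each ordered pair of processes is linked by a reliable (no loss, corruption, duplication or creation), asynchronous, not necessarily FIFO channel. $p_w$ is the single writer, invoking writes sequentially; $v_0$ is the initial value. Messages: $\textsc{write}(b,v)$ with $b\in\{0,1\}$, which stands for the two types $\textsc{write0}(v)$ and $\textsc{write1}(v)$; $\textsc{read}()$; $\textsc{proceed}()$. Variables of $p_i$. These are: $history_i$ with $history_i[0]=v_0$; $w\_sync_i[1..n]$, initially all $0$; $r\_sync_i[1..n]$, initially all $0$. $\mathsf{write}(v)$ by $p_w$: $wsn\gets w\_sync_w[w]+1$; $w\_sync_w[w]\gets wsn$; $history_w[wsn]\gets v$. Send $\textsc{write}(wsn\bmod 2,v)$ to each $p_j$ with $w\_sync_w[j]=wsn-1$. Wait until at least $n-t$ indices $j$ have $w\_sync_w[j]=wsn$. Return. $\mathsf{read}()$ by $p_i$: $r\_sync_i[i]\gets r\_sync_i[i]+1$ and call the new value $rsn$. Send $\textsc{read}()$ to all $p_j$ with $j\ne i$. Wait until at least $n-t$ indices $j$ have $r\_sync_i[j]=rsn$. Let $sn\gets w\_sync_i[i]$. Wait until at least $n-t$ indices $j$ have $w\_sync_i[j]\ge sn$. Return $history_i[sn]$. On receipt of $\textsc{write}(b,v)$ from $p_j$ at $p_i$: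 Wait until $b=(w\_sync_i[j]+1)\bmod 2$. Let $wsn\gets w\_sync_i[j]+1$. If $wsn=w\_sync_i[i]+1$, then set $w\_sync_i[i]\gets wsn$ and $history_i[wsn]\gets v$, and send $\textsc{write}(wsn\bmod 2,v)$ to each $p_\ell$ with $w\_sync_i[\ell]=wsn-1$. Else, if $wsn<w\_sync_i[i]$, send $\textsc{write}((wsn+1)\bmod 2,history_i[wsn+1])$ to $p_j$. Finally set $w\_sync_i[j]\gets wsn$. On receipt of $\textsc{read}()$ from $p_j$ at $p_i$: Let $sn\gets w\_sync_i[i]$; wait until $w\_sync_i[j]\ge sn$; send $\textsc{proceed}()$ to $p_j$. On receipt of $\textsc{proceed}()$ from $p_j$ at $p_i$: $r\_sync_i[j]\gets r\_sync_i[j]+1$. Message handlers run concurrently; a waiting handler does not block the reception of other messages. *)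

From mathcomp Require Import all_boot.
Set Implicit Arguments. Unset Strict Implicit. Unset Printing Implicit Defensive.

Section Model.
Variables (n t : nat) (w : 'I_n) (V : Type) (v0 : V).

(* WRITE(b,v): the bit b in {0,1} is encoded as a bool
   (true <-> 1, i.e. b = odd k <-> b = k mod 2).  The value carried is an
   [option V] because it is read from a history slot (always defined by the
   algorithm; [None] would mean "undefined entry"). *)
Inductive content :=
| MWrite of bool & option V
| MRead
| MProceed.

Record msg := Msg { src : 'I_n; dst : 'I_n; body : content }.

Inductive opstate :=
| Idle
| Writing of nat      (* waiting for n-t indices j with w_sync[j] = wsn *)
| Reading1 of nat     (* waiting for n-t indices j with r_sync[j] = rsn *)
| Reading2 of nat.    (* waiting for n-t indices j with w_sync[j] >= sn *)

Record pstate := PState {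
  hist   : nat -> option V;          (* history_i ; None = not yet written *)
  wsync  : 'I_n -> nat;
  rsync  : 'I_n -> nat;
  op     : opstate;
  pendW  : seq ('I_n * bool * option V); (* WRITE handlers waiting: (sender, b, v) *)
  pendR  : seq ('I_n * nat);         (* READ handlers waiting: (sender, sn) *)
  crashed : bool }.

Record gstate := GState { procs : 'I_n -> pstate; chan : seq msg }.

Definition upd {A : eqType} {B : Type} (f : A -> B) (x : A) (y : B) : A -> B :=
  fun z => if z == x then y else f z.

Definition setP (g : gstate) (i : 'I_n) (p : pstate) (sent : seq msg) : gstate :=
  GState (upd (procs g) i p) (chan g ++ sent).

Definition with_wsync p f := PState (hist p) f (rsync p) (op p) (pendW p) (pendR p) (crashed p).
Definition with_hist p h := PState h (wsync p) (rsync p) (op p) (pendW p) (pendR p) (crashed p).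
Definition with_rsync p f := PState (hist p) (wsync p) f (op p) (pendW p) (pendR p) (crashed p).
Definition with_op p o := PState (hist p) (wsync p) (rsync p) o (pendW p) (pendR p) (crashed p).
Definition with_pendW p s := PState (hist p) (wsync p) (rsync p) (op p) s (pendR p) (crashed p).
Definition with_pendR p s := PState (hist p) (wsync p) (rsync p) (op p) (pendW p) s (crashed p).
Definition with_crashed p c := PState (hist p) (wsync p) (rsync p) (op p) (pendW p) (pendR p) c.

Definition init_proc : pstate :=
  PState (fun k => if k == 0 then Some v0 else None) (fun _ => 0) (fun _ => 0)
         Idle [::] [::] false.

Definition init_state : gstate := GState (fun _ => init_proc) [::].

Definition alive (g : gstate) (i : 'I_n) := ~~ crashed (procs g i).

(* Atomic steps: a process executes its code between two waits atomically;
   message handlers run concurrently (pending handlers are kept in pendW/pendR). *)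
Inductive step : gstate -> gstate -> Prop :=
| StartWrite g v :
    alive g w -> op (procs g w) = Idle ->
    let p := procs g w in
    let wsn := (wsync p w).+1 in
    let p1 := with_op (with_hist (with_wsync p (upd (wsync p) w wsn))
                                 (upd (hist p) wsn (Some v))) (Writing wsn) in
    step g (setP g w p1
      [seq Msg w j (MWrite (odd wsn) (Some v)) | j <- enum 'I_n & wsync p1 j == wsn.-1])
| EndWrite g wsn :
    alive g w -> op (procs g w) = Writing wsn ->
    n - t <= #|[pred j | wsync (procs g w) j == wsn]| ->
    step g (setP g w (with_op (procs g w) Idle) [::])
| StartRead g i :
    alive g i -> op (procs g i) = Idle ->
    let p := procs g i in
    let rsn := (rsync p i).+1 in
    step g (setP g i (with_op (with_rsync p (upd (rsync p) i rsn)) (Reading1 rsn))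
      [seq Msg i j MRead | j <- enum 'I_n & j != i])
| MidRead g i rsn :
    alive g i -> op (procs g i) = Reading1 rsn ->
    n - t <= #|[pred j | rsync (procs g i) j == rsn]| ->
    step g (setP g i (with_op (procs g i) (Reading2 (wsync (procs g i) i))) [::])
| EndRead g i sn :
    alive g i -> op (procs g i) = Reading2 sn ->
    n - t <= #|[pred j | sn <= wsync (procs g i) j]| ->
    (* returns history_i[sn] *)
    step g (setP g i (with_op (procs g i) Idle) [::])
(* reception of messages (any in-transit message, channels not FIFO) *)
| DeliverWrite c1 c2 ps j i b v :
    ~~ crashed (ps i) ->
    let g := GState ps (c1 ++ Msg j i (MWrite b v) :: c2) in
    step g (GState (upd ps i (with_pendW (ps i) (rcons (pendW (ps i)) (j, b, v)))) (c1 ++ c2))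
| DeliverRead c1 c2 ps j i :
    ~~ crashed (ps i) ->
    let g := GState ps (c1 ++ Msg j i MRead :: c2) in
    step g (GState (upd ps i (with_pendR (ps i)
                  (rcons (pendR (ps i)) (j, wsync (ps i) i)))) (c1 ++ c2))
| DeliverProceed c1 c2 ps j i :
    ~~ crashed (ps i) ->
    let g := GState ps (c1 ++ Msg j i MProceed :: c2) in
    step g (GState (upd ps i (with_rsync (ps i) (upd (rsync (ps i)) j (rsync (ps i) j).+1)))
                   (c1 ++ c2))
(* a waiting WRITE(b,v) handler (from p_j) at p_i whose wait condition
   b = (w_sync_i[j]+1) mod 2 holds; three cases of the if/else-if *)
| FireWrite1 g i q1 q2 j b v :
    alive g i -> pendW (procs g i) = q1 ++ (j, b, v) :: q2 ->
    let p := with_pendW (procs g i) (q1 ++ q2) in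
    b = odd (wsync p j).+1 ->
    let wsn := (wsync p j).+1 in
    wsn = (wsync p i).+1 ->
    let p1 := with_hist (with_wsync p (upd (wsync p) i wsn)) (upd (hist p) wsn v) in
    step g (setP g i (with_wsync p1 (upd (wsync p1) j wsn))
      [seq Msg i l (MWrite (odd wsn) v) | l <- enum 'I_n & wsync p1 l == wsn.-1])
| FireWrite2 g i q1 q2 j b v :
    alive g i -> pendW (procs g i) = q1 ++ (j, b, v) :: q2 ->
    let p := with_pendW (procs g i) (q1 ++ q2) in
    b = odd (wsync p j).+1 ->
    let wsn := (wsync p j).+1 in
    wsn <> (wsync p i).+1 -> wsn < wsync p i ->
    step g (setP g i (with_wsync p (upd (wsync p) j wsn))
      [:: Msg i j (MWrite (odd wsn.+1) (hist p wsn.+1))])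
| FireWrite3 g i q1 q2 j b v :
    alive g i -> pendW (procs g i) = q1 ++ (j, b, v) :: q2 ->
    let p := with_pendW (procs g i) (q1 ++ q2) in
    b = odd (wsync p j).+1 ->
    let wsn := (wsync p j).+1 in
    wsn <> (wsync p i).+1 -> ~~ (wsn < wsync p i) ->
    step g (setP g i (with_wsync p (upd (wsync p) j wsn)) [::])
| FireRead g i q1 q2 j sn :
    alive g i -> pendR (procs g i) = q1 ++ (j, sn) :: q2 ->
    sn <= wsync (procs g i) j ->
    step g (setP g i (with_pendR (procs g i) (q1 ++ q2)) [:: Msg i j MProceed])
| Crash g i :
    alive g i -> #|[pred k | crashed (procs g k)]| < t ->
    step g (setP g i (with_crashed (procs g i) true) [::]).

Definition is_run (r : nat -> gstate) : Prop :=
  r 0 = init_state /\ forall k, step (r k) (r k.+1) \/ r k.+1 = r k.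

End Model.

From Pilot Require Import Defs.
From mathcomp Require Import all_boot zify.

Set Implicit Arguments. Unset Strict Implicit. Unset Printing Implicit Defensive.

(* The property "w_sync_i[i] dominates every w_sync_i[j]" is an invariant of
   every step.  The writer raises its own entry before anything else; a WRITE
   handler at p_i sets w_sync_i[j] to w_sync_i[j]+1 and either raises
   w_sync_i[i] to the same value first, or is in a branch where this value is
   at most w_sync_i[i] (since w_sync_i[j] <= w_sync_i[i] already). *)

Section Invariant.
Variables (n t : nat) (w : 'I_n) (V : Type) (v0 : V).

Definition maximal_at (f : 'I_n -> nat) (i : 'I_n) := forall j, f j <= f i.

Lemma maximal_at_bigmax f i : maximal_at f i -> f i = \max_(j < n) f j.
Proof.
move=> fi_max; apply/eqP; rewrite eqn_leq leq_bigmax /=.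
by apply/bigmax_leqP => j _; exact: fi_max.
Qed.

Lemma maximal_at_upd f i j x :
  maximal_at f i -> (if j == i then f i <= x else x <= f i) ->
  maximal_at (upd f j x) i.
Proof.
move=> fi_max; rewrite /upd; case: (eqVneq j i) => [-> | /negbTE ji] le_x k.
  by rewrite eqxx; case: eqP => // _; exact: leq_trans (fi_max k) le_x.
by rewrite [i == j]eq_sym ji; case: eqP.
Qed.

Definition own_wsync_maximal (g : gstate n V) :=
  forall i, maximal_at (wsync (procs g i)) i.

Lemma own_wsync_maximal_init : own_wsync_maximal (init_state n v0).
Proof. by []. Qed.

Lemma own_wsync_maximal_upd {ps c i p} :
  own_wsync_maximal (GState ps c) -> maximal_at (wsync p) i ->
  own_wsync_maximal (GState (upd ps i p) c).
Proof. by move=> ps_max p_max k; rewrite /= /upd; case: eqP => [->|_]. Qed.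

Lemma own_wsync_maximal_setP {g i p s} :
  own_wsync_maximal g -> maximal_at (wsync p) i ->
  own_wsync_maximal (Defs.setP g i p s).
Proof. by case: g => ps c; exact: own_wsync_maximal_upd. Qed.

Lemma step_own_wsync_maximal g g' :
  step t w g g' -> own_wsync_maximal g -> own_wsync_maximal g'.
Proof.
case=> {g g'}
  [g v _ _ p wsn p1 | g wsn _ _ _ | g i _ _ p rsn | g i rsn _ _ _ | g i sn _ _ _
  | c1 c2 ps j i b v _ g | c1 c2 ps j i _ g | c1 c2 ps j i _ g
  | g i q1 q2 j b v _ _ p _ wsn own_j p1 | g i q1 q2 j b v _ _ p _ wsn _ lt_j
  | g i q1 q2 j b v _ _ p _ wsn ne_own ge_j | g i q1 q2 j sn _ _ _ | g i _ _] /= g_max.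
(* Apart from StartWrite and the WRITE handlers, no step changes a [wsync] entry. *)
all: try first [ by apply: (own_wsync_maximal_setP g_max); exact: g_max
               | by apply: (own_wsync_maximal_upd g_max); exact: g_max ].
all: apply: (own_wsync_maximal_setP g_max).
- by apply: (maximal_at_upd (g_max w)); rewrite eqxx.
- rewrite /=; apply: maximal_at_upd.
    by apply: (maximal_at_upd (g_max i)); rewrite eqxx own_j.
  by rewrite /upd eqxx; case: ifP.
- apply: (maximal_at_upd (g_max i)).
  by move: lt_j; rewrite /wsn /p /=; case: eqP => [->|_]; lia.
- apply: (maximal_at_upd (g_max i)).
  have := g_max i j; move: ne_own ge_j; rewrite /wsn /p /=.
  by case: eqP => [->|_]; lia.
Qed.

Lemma run_invariant (P : gstate n V -> Prop) (r : nat -> gstate n V) :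
  P (init_state n v0) -> (forall g g', step t w g g' -> P g -> P g') ->
  is_run t w v0 r -> forall k, P (r k).
Proof.
move=> P_init P_step [r0 r_step]; elim=> [|k IHk]; first by rewrite r0.
by case: (r_step k) => [step_k | ->] //; exact: P_step step_k IHk.
Qed.

End Invariant.

Theorem lemma3 (n t : nat) (w : 'I_n) (V : Type) (v0 : V) (Hnt : 2 * t < n)
  (r : nat -> gstate n V) (Hr : is_run t w v0 r) (k : nat) (i : 'I_n) :
  wsync (procs (r k) i) i = \max_(j < n) wsync (procs (r k) i) j.
Proof.
apply: maximal_at_bigmax.
apply: (run_invariant (own_wsync_maximal_init v0) _ Hr).
exact: step_own_wsync_maximal.
Qed.
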